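(* Let $I$ be a nonempty real interval containing $0$ and let $f\colon I^n\to\mathbb{R}$. The following are equivalent: (i) $f$ is comonotonically modular; (ii) there exist a comonotonically modular $g\colon I_+^n\to\mathbb{R}$ and a comonotonically modular $h\colon I_-^n\to\mathbb{R}$ such that $f_0(\mathbf{x})=g_0(\mathbf{x}^+)+h_0(-\mathbf{x}^-)$ for every $\mathbf{x}\in I^n$; (iii) there exist $g\colon I_+^n\to\mathbb{R}$ and $h\colon I_-^n\to\mathbb{R}$ such that for every $\sigma\in S_n$ and every $\mathbf{x}\in I^n_\sigma$, $$f_0(\mathbf{x})=\sum_{1\leq i\leq p}\Big(h\big(x_{\sigma(i)}\mathbf{1}_{A^\downarrow_\sigma(i)}\big)-h\big(x_{\sigma(i)}\mathbf{1}_{A^\downarrow_\sigma(i-1)}\big)\Big)+\sum_{p+1\leq i\leq n}\Big(g\big(x_{\sigma(i)}\mathbf{1}_{A^\uparrow_\sigma(i)}\big)-g\big(x_{\sigma(i)}\mathbf{1}_{A^\uparrow_\sigma(i+1)}\big)\Big),$$ where $p\in\{0,\ldots,n\}$ is such that $x_{\sigma(p)}<0\leq x_{\sigma(p+1)}$ (with the conventions $x_{\sigma(0)}=-\infty$, $x_{\sigma(n+1)}=+\infty$). Moreover, in (ii) and (iii) one can take $g=f|_{I_+^n}$ and $h=f|_{I_-^n}$.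
   Context: Notation: $[n]=\{1,\ldots,n\}$; $S_n$ is the set of permutations of $[n]$; $I_+=I\cap[0,\infty[$, $I_-=I\cap\,]-\infty,0]$; $\mathbf{1}_A$ is the indicator tuple of $A\subseteq[n]$, $\mathbf{0}=\mathbf{1}_\varnothing$; for a function $u$ defined at $\mathbf{0}$, $u_0=u-u(\mathbf{0})$; $\mathbf{x}^+$ has components $\max(x_i,0)$ and $\mathbf{x}^-=(-\mathbf{x})^+$. For $\sigma\in S_n$, $\mathbb{R}^n_\sigma=\{\mathbf{x}: x_{\sigma(1)}\leq\cdots\leq x_{\sigma(n)}\}$, $I^n_\sigma=I^n\cap\mathbb{R}^n_\sigma$, $A^\uparrow_\sigma(i)=\{\sigma(i),\ldots,\sigma(n)\}$ with $A^\uparrow_\sigma(n+1)=\varnothing$, and $A^\downarrow_\sigma(i)=\{\sigma(1),\ldots,\sigma(i)\}$ with $A^\downarrow_\sigma(0)=\varnothing$. Two tuples in $J^n$ ($J$ an interval) are comonotonic if they both lie in $J^n\cap\mathbb{R}^n_\sigma$ for some $\sigma\in S_n$. A function $u\colon J^n\to\mathbb{R}$ is comonotonically modular if $u(\mathbf{x})+u(\mathbf{x}')=u(\mathbf{x}\wedge\mathbf{x}')+u(\mathbf{x}\vee\mathbf{x}')$ for all comonotonic $\mathbf{x},\mathbf{x}'\in J^n$, where $\wedge,\vee$ are componentwise min and max. *)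

(* The real line is abstracted to an arbitrary real field
   R : realFieldType (the statement is purely order-algebraic). *)
From HB Require Import structures.
From mathcomp Require Import all_boot all_order all_algebra all_fingroup.
Set Implicit Arguments. Unset Strict Implicit. Unset Printing Implicit Defensive.
Import Order.TTheory GRing.Theory Num.Theory.
Local Open Scope ring_scope.

Section Defs.
Variables (R : realFieldType) (n : nat).

Definition tup := {ffun 'I_n -> R}.

Definition is_interval (J : pred R) : Prop :=
  forall x y z : R, J x -> J z -> x <= y -> y <= z -> J y.

Definition Ipos (J : pred R) : pred R := fun t => J t && (0 <= t).
Definition Ineg (J : pred R) : pred R := fun t => J t && (t <= 0).

Definition inJn (J : pred R) (x : tup) : Prop := forall i, J (x i).

Definition sorted_by (s : 'S_n) (x : tup) : Prop :=
  forall i j : 'I_n, (i <= j)%N -> x (s i) <= x (s j).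

Definition comonotonic (J : pred R) (x y : tup) : Prop :=
  exists s : 'S_n, [/\ inJn J x, sorted_by s x, inJn J y & sorted_by s y].

Definition tmin (x y : tup) : tup := [ffun i => Num.min (x i) (y i)].
Definition tmax (x y : tup) : tup := [ffun i => Num.max (x i) (y i)].

Definition comod (J : pred R) (u : tup -> R) : Prop :=
  forall x y : tup, comonotonic J x y -> u x + u y = u (tmin x y) + u (tmax x y).

Definition tzero : tup := [ffun _ => 0].
Definition zeroed (u : tup -> R) (x : tup) : R := u x - u tzero.

Definition tpos (x : tup) : tup := [ffun i => Num.max (x i) 0].
Definition tneg (x : tup) : tup := [ffun i => Num.max (- x i) 0].
Definition topp (x : tup) : tup := [ffun i => - x i].

Definition scind (t : R) (A : {set 'I_n}) : tup :=
  [ffun i => if i \in A then t else 0].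

(* 1-indexed: Aup s i = {s(i),...,s(n)}, Adown s i = {s(1),...,s(i)};
   with 0-indexed ordinals j, s(j+1) in paper notation is s j here. *)
Definition Aup (s : 'S_n) (i : nat) : {set 'I_n} := [set s j | j : 'I_n & (i <= j.+1)%N].
Definition Adown (s : 'S_n) (i : nat) : {set 'I_n} := [set s j | j : 'I_n & (j.+1 <= i)%N].

(* p is such that x_{s(p)} < 0 <= x_{s(p+1)}, with x_{s(0)} = -oo, x_{s(n+1)} = +oo *)
Definition split_index (s : 'S_n) (x : tup) (p : nat) : Prop :=
  (p <= n)%N /\
  (forall k : 'I_n, k.+1 = p -> x (s k) < 0) /\
  (forall k : 'I_n, nat_of_ord k = p -> 0 <= x (s k)).

Definition cond_ii (J : pred R) (f g h : tup -> R) : Prop :=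
  [/\ comod (Ipos J) g, comod (Ineg J) h &
      forall x : tup, inJn J x ->
        zeroed f x = zeroed g (tpos x) + zeroed h (topp (tneg x))].

(* Condition (iii) for given g, h; sum index k : 'I_n corresponds to i = k+1 *)
Definition cond_iii (J : pred R) (f g h : tup -> R) : Prop :=
  forall (s : 'S_n) (x : tup) (p : nat),
    inJn J x -> sorted_by s x -> split_index s x p ->
    zeroed f x =
      \sum_(k < n | (k < p)%N)
         (h (scind (x (s k)) (Adown s k.+1)) - h (scind (x (s k)) (Adown s k)))
    + \sum_(k < n | (p <= k)%N)
         (g (scind (x (s k)) (Aup s k.+1)) - g (scind (x (s k)) (Aup s k.+2))).

End Defs.

From HB Require Import structures.
From mathcomp Require Import all_boot all_order all_algebra all_fingroup.
From mathcomp Require Import lra.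
Import Order.TTheory GRing.Theory Num.Theory.
Local Open Scope ring_scope.
Set Implicit Arguments. Unset Strict Implicit.

(* Within the cone of tuples sorted by a fixed permutation s, pointwise min and
   max act separately on each ranked coordinate x (s k).  Hence a function that
   on every such cone is a constant plus a sum of one-variable functions of the
   ranked coordinates is comonotonically modular, and (iii) is a representation
   of this kind.  Composition with the coordinatewise monotone maps x |-> x^+
   and x |-> -x^- preserves comonotonic modularity, whence (ii) implies (i).  Conversely, x and 0 are comonotonic with
   x /\ 0 = -x^- and x \/ 0 = x^+, which is (ii) with g = h = f; and (iii) follows
   by telescoping f along the truncations of -x^- and x^+ to their first or last
   ranks, each step being one modularity identity for a comonotonic pair. *)

Section ComonotonicModularity.
Variables (R : realFieldType) (n : nat).
Local Notation tup := (tup R n).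

Lemma exists_sorted_by (x : tup) : exists s : 'S_n, sorted_by s x.
Proof.
pose leT i j := x i <= x j.
have leT_total : total leT by move=> i j; apply: le_total.
have leT_trans : transitive leT by move=> j i k; apply: le_trans.
pose e := sort leT (enum 'I_n).
have size_e : size e == n by rewrite size_sort size_enum_ord.
have /tuple_uniqP inj : uniq (Tuple size_e) by rewrite /= sort_uniq enum_uniq.
exists (perm inj) => i j le_ij; rewrite !permE !(tnth_nth i) /=.
apply: (sorted_leq_nth leT_trans (fun a => lexx (x a)) _ (sort_sorted leT_total _)).
- by rewrite inE (eqP size_e).
- by rewrite inE (eqP size_e).
- exact: le_ij.
Qed.

Lemma inJn_tmin J (x y : tup) : inJn J x -> inJn J y -> inJn J (tmin x y).
Proof. by move=> Jx Jy i; rewrite ffunE; case: leP. Qed.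

Lemma inJn_tmax J (x y : tup) : inJn J x -> inJn J y -> inJn J (tmax x y).
Proof. by move=> Jx Jy i; rewrite ffunE; case: leP. Qed.

Lemma comonotonic_inJn J (x y : tup) : comonotonic J x y ->
  [/\ inJn J x, inJn J y, inJn J (tmin x y) & inJn J (tmax x y)].
Proof. by case=> s [Jx _ Jy _]; split; [| | apply: inJn_tmin | apply: inJn_tmax]. Qed.

Lemma sorted_by_tmin s (x y : tup) :
  sorted_by s x -> sorted_by s y -> sorted_by s (tmin x y).
Proof. by move=> sx sy i j le_ij; rewrite !ffunE le_min2 ?sx ?sy. Qed.

Lemma sorted_by_tmax s (x y : tup) :
  sorted_by s x -> sorted_by s y -> sorted_by s (tmax x y).
Proof. by move=> sx sy i j le_ij; rewrite !ffunE le_max2 ?sx ?sy. Qed.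

Lemma tup_eq_ranks (s : 'S_n) (x y : tup) : (forall k, x (s k) = y (s k)) -> x = y.
Proof. by move=> e; apply/ffunP => i; rewrite -(permKV s i) e. Qed.

Lemma comod_subset (J J' : pred R) (u : tup -> R) :
  (forall t, J' t -> J t) -> comod J u -> comod J' u.
Proof.
move=> sJ' mu x y [s [Jx sx Jy sy]].
by apply: mu; exists s; split=> // i; apply: sJ'.
Qed.

Lemma comod_add (J : pred R) (u v : tup -> R) :
  comod J u -> comod J v -> comod J (fun x => u x + v x).
Proof. by move=> mu mv x y cxy /=; rewrite addrACA mu // mv // addrACA. Qed.

Lemma comod_eq_in (J : pred R) (u v : tup -> R) (c : R) :
  (forall x, inJn J x -> u x = v x + c) -> comod J v -> comod J u.
Proof.
move=> e mv x y cxy; have [Jx Jy Jm JM] := comonotonic_inJn cxy.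
by rewrite !e // addrACA mv // addrACA.
Qed.

Definition tmap (phi : R -> R) (x : tup) : tup := [ffun i => phi (x i)].

Lemma homo_min (phi : R -> R) : {homo phi : a b / a <= b} ->
  forall a b, phi (Num.min a b) = Num.min (phi a) (phi b).
Proof.
move=> mphi a b; case: (leP a b) => [le_ab|/ltW le_ba]; first by rewrite !min_l ?mphi.
by rewrite !min_r ?mphi.
Qed.

Lemma homo_max (phi : R -> R) : {homo phi : a b / a <= b} ->
  forall a b, phi (Num.max a b) = Num.max (phi a) (phi b).
Proof.
move=> mphi a b; case: (leP a b) => [le_ab|/ltW le_ba]; first by rewrite !max_r ?mphi.
by rewrite !max_l ?mphi.
Qed.

Lemma comod_tmap (J J' : pred R) (phi : R -> R) (g : tup -> R) :
  {homo phi : a b / a <= b} -> (forall t, J t -> J' (phi t)) ->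
  comod J' g -> comod J (fun x => g (tmap phi x)).
Proof.
move=> mphi JJ' mg x y [s [Jx sx Jy sy]].
have -> : tmap phi (tmin x y) = tmin (tmap phi x) (tmap phi y).
  by apply/ffunP => i; rewrite !ffunE homo_min.
have -> : tmap phi (tmax x y) = tmax (tmap phi x) (tmap phi y).
  by apply/ffunP => i; rewrite !ffunE homo_max.
apply: mg; exists s; split=> [i|i j le_ij|i|i j le_ij]; rewrite !ffunE.
- exact/JJ'/Jx.
- exact/mphi/sx.
- exact/JJ'/Jy.
- exact/mphi/sy.
Qed.

Lemma tpos_tmap (x : tup) : tpos x = tmap (Num.max^~ 0) x.
Proof. by apply/ffunP => i; rewrite !ffunE. Qed.

Lemma topp_tneg_tmap (x : tup) : topp (tneg x) = tmap (Num.min^~ 0) x.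
Proof. by apply/ffunP => i; rewrite !ffunE oppr_max opprK oppr0. Qed.

Lemma cond_ii_comod (J : pred R) (f g h : tup -> R) : J 0 -> cond_ii J f g h -> comod J f.
Proof.
move=> J0 [mg mh e].
pose c := f (tzero R n) - g (tzero R n) - h (tzero R n).
apply: (@comod_eq_in _ f (fun x => g (tmap (Num.max^~ 0) x) + h (tmap (Num.min^~ 0) x)) c).
  by move=> x Jx; have := e x Jx; rewrite /zeroed tpos_tmap topp_tneg_tmap /c; lra.
apply: comod_add; [apply: comod_tmap mg | apply: comod_tmap mh].
- by move=> a b le_ab; rewrite le_max2.
- by move=> t Jt; rewrite /Ipos le_max lexx orbT andbT; case: leP.
- by move=> a b le_ab; rewrite le_min2.
- by move=> t Jt; rewrite /Ineg ge_min lexx orbT andbT; case: leP.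
Qed.

Lemma comod_zeroed_split (J : pred R) (f : tup -> R) : J 0 -> comod J f ->
  forall x, inJn J x -> zeroed f x = zeroed f (tpos x) + zeroed f (topp (tneg x)).
Proof.
move=> J0 mf x Jx; have [s sx] := exists_sorted_by x.
have cx0 : comonotonic J x (tzero R n).
  by exists s; split=> // [i|i j _]; rewrite !ffunE ?lexx.
have tmin_x0 : tmin x (tzero R n) = topp (tneg x).
  by apply/ffunP => i; rewrite !ffunE oppr_max opprK oppr0.
have tmax_x0 : tmax x (tzero R n) = tpos x by apply/ffunP => i; rewrite !ffunE.
have E := mf _ _ cx0; rewrite tmin_x0 tmax_x0 in E.
rewrite /zeroed; lra.
Qed.

Lemma comod_cond_ii (J : pred R) (f : tup -> R) : J 0 -> comod J f -> cond_ii J f f f.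
Proof.
move=> J0 mf; split; last exact: comod_zeroed_split.
- by apply: comod_subset mf => t /andP[].
- by apply: comod_subset mf => t /andP[].
Qed.

Lemma exists_split_index (s : 'S_n) (x : tup) : exists p, split_index s x p.
Proof.
pose P k := (n <= k)%N || [exists j : 'I_n, (nat_of_ord j == k) && (0 <= x (s j))].
have Pn : P n by rewrite /P leqnn.
have [p Pp minp] := ex_minnP (ex_intro P n Pn).
exists p; split; [|split].
- exact: minp.
- move=> k Ek; rewrite ltNge; apply/negP => xk_ge0.
  have : (p <= k)%N by apply: minp; apply/orP; right; apply/existsP; exists k; rewrite eqxx.
  by rewrite -Ek ltnn.
- move=> k Ek; move: Pp; rewrite /P -Ek leqNgt ltn_ord /=.
  by case/existsP => j /andP [/eqP jk]; rewrite (_ : k = j) //; apply/val_inj.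
Qed.

Lemma split_index_ltr0 (s : 'S_n) (x : tup) p : sorted_by s x -> split_index s x p ->
  forall k : 'I_n, (x (s k) < 0) = (k < p)%N.
Proof.
move=> sx [le_pn [neg_p pos_p]] k; case: (ltnP k p) => [lt_kp|le_pk].
- have lt_p1n : (p.-1 < n)%N by rewrite prednK ?(leq_ltn_trans _ lt_kp).
  apply: (le_lt_trans (sx k (Ordinal lt_p1n) _)); last first.
    by apply: neg_p; rewrite /= prednK ?(leq_ltn_trans _ lt_kp).
  by rewrite /= -ltnS prednK ?(leq_ltn_trans _ lt_kp).
- have lt_pn : (p < n)%N by apply: leq_ltn_trans le_pk _.
  by apply/negbTE; rewrite -leNgt (le_trans (pos_p (Ordinal lt_pn) erefl)) ?sx.
Qed.

Lemma comod_rank_separable (J : pred R) (f : tup -> R) :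
  (forall s : 'S_n, exists (c : R) (psi : 'I_n -> R -> R),
     forall x, inJn J x -> sorted_by s x -> f x = c + \sum_(k < n) psi k (x (s k))) ->
  comod J f.
Proof.
move=> sep x y cxy; have [Jx Jy Jm JM] := comonotonic_inJn cxy.
have [s [_ sx _ sy]] := cxy; have [c [psi E]] := sep s.
have sm := sorted_by_tmin sx sy; have sM := sorted_by_tmax sx sy.
rewrite !E // addrACA [RHS]addrACA -!big_split /=; congr (_ + _); apply: eq_bigr => k _.
by rewrite !ffunE; case: leP => _ //; rewrite addrC.
Qed.

Definition signed_increment (g h : tup -> R) (s : 'S_n) (k : 'I_n) (t : R) : R :=
  if t < 0 then h (scind t (Adown s k.+1)) - h (scind t (Adown s k))
  else g (scind t (Aup s k.+1)) - g (scind t (Aup s k.+2)).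

Lemma split_sum_signed_increment (g h : tup -> R) s (x : tup) p :
  sorted_by s x -> split_index s x p ->
  \sum_(k < n | (k < p)%N)
     (h (scind (x (s k)) (Adown s k.+1)) - h (scind (x (s k)) (Adown s k)))
  + \sum_(k < n | (p <= k)%N)
     (g (scind (x (s k)) (Aup s k.+1)) - g (scind (x (s k)) (Aup s k.+2)))
  = \sum_(k < n) signed_increment g h s k (x (s k)).
Proof.
move=> sx sp; rewrite [RHS](bigID (fun k : 'I_n => (k < p)%N)) /=.
have neg_k := split_index_ltr0 sx sp.
congr (_ + _).
- by apply: eq_bigr => k lt_kp; rewrite /signed_increment neg_k lt_kp.
- apply: eq_big => [k|k le_pk]; first by rewrite leqNgt.
  by rewrite /signed_increment neg_k ltnNge le_pk.
Qed.

Lemma cond_iii_comod (J : pred R) (f g h : tup -> R) : cond_iii J f g h -> comod J f.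
Proof.
move=> e; apply: comod_rank_separable => s.
exists (f (tzero R n)), (signed_increment g h s) => x Jx sx.
have [p sp] := exists_split_index s x.
by rewrite -(split_sum_signed_increment g h sx sp) -(e s x p) // /zeroed addrC subrK.
Qed.

Definition rank_prefix (s : 'S_n) (x : tup) (k : nat) : tup :=
  [ffun i => if ((s^-1)%g i < k)%N then x i else 0].
Definition rank_suffix (s : 'S_n) (x : tup) (k : nat) : tup :=
  [ffun i => if (k <= (s^-1)%g i)%N then x i else 0].

Lemma rank_prefixE (s : 'S_n) (x : tup) (k : nat) (j : 'I_n) :
  rank_prefix s x k (s j) = if (j < k)%N then x (s j) else 0.
Proof. by rewrite ffunE permK. Qed.

Lemma rank_suffixE (s : 'S_n) (x : tup) (k : nat) (j : 'I_n) :
  rank_suffix s x k (s j) = if (k <= j)%N then x (s j) else 0.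
Proof. by rewrite ffunE permK. Qed.

Lemma scind_Adown_rank (s : 'S_n) (t : R) (i : nat) (k : 'I_n) :
  scind t (Adown s i) (s k) = if (k < i)%N then t else 0.
Proof. by rewrite ffunE mem_imset ?inE //; apply: perm_inj. Qed.

Lemma scind_Aup_rank (s : 'S_n) (t : R) (i : nat) (k : 'I_n) :
  scind t (Aup s i) (s k) = if (i <= k.+1)%N then t else 0.
Proof. by rewrite ffunE mem_imset ?inE //; apply: perm_inj. Qed.

Lemma rank_prefix0 (s : 'S_n) (x : tup) : rank_prefix s x 0 = tzero R n.
Proof. by apply/ffunP => i; rewrite !ffunE. Qed.

Lemma rank_suffix_size (s : 'S_n) (x : tup) : rank_suffix s x n = tzero R n.
Proof. by apply/ffunP => i; rewrite !ffunE leqNgt ltn_ord. Qed.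

Lemma rank_prefix_split (s : 'S_n) (x : tup) p : sorted_by s x -> split_index s x p ->
  rank_prefix s x p = topp (tneg x).
Proof.
move=> sx sp; apply: (tup_eq_ranks (s := s)) => j.
by rewrite rank_prefixE !ffunE -(split_index_ltr0 sx sp) oppr_max opprK oppr0.
Qed.

Lemma rank_suffix_split (s : 'S_n) (x : tup) p : sorted_by s x -> split_index s x p ->
  rank_suffix s x p = tpos x.
Proof.
move=> sx sp; apply: (tup_eq_ranks (s := s)) => j.
by rewrite rank_suffixE !ffunE leqNgt -(split_index_ltr0 sx sp); case: ltP.
Qed.

Section RankIncrements.
Variables (J : pred R) (f : tup -> R) (s : 'S_n) (x : tup).
Hypotheses (J0 : J 0) (mf : comod J f) (Jx : inJn J x) (sx : sorted_by s x).

Lemma comod_prefix_increment (k : 'I_n) : x (s k) <= 0 ->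
  f (scind (x (s k)) (Adown s k.+1)) - f (scind (x (s k)) (Adown s k))
  = f (rank_prefix s x k.+1) - f (rank_prefix s x k).
Proof.
move=> xk_le0.
have x_le_xk (j : 'I_n) : (j <= k)%N -> x (s j) <= x (s k) by apply: sx.
set a := scind (x (s k)) _; set b := rank_prefix s x k.
have cab : comonotonic J a b.
  exists s; split=> [i|i j le_ij|i|i j le_ij].
  - by rewrite ffunE; case: ifP.
  - rewrite !scind_Adown_rank; case: (ltnP i k.+1); case: (ltnP j k.+1) => // lt_jk le_ki.
    by have := leq_trans le_ki le_ij; rewrite leqNgt lt_jk.
  - by rewrite ffunE; case: ifP.
  - rewrite !rank_prefixE; case: (ltnP i k) => lt_ik; case: (ltnP j k) => lt_jk //.
    + by apply: sx.
    + by apply: le_trans xk_le0; apply/x_le_xk/ltnW.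
    + by have := leq_trans lt_ik le_ij; rewrite leqNgt lt_jk.
have min_ab : tmin a b = rank_prefix s x k.+1.
  apply: (tup_eq_ranks (s := s)) => j; rewrite ffunE scind_Adown_rank !rank_prefixE ltnS.
  case: (ltngtP j k) => [lt_jk|lt_kj|/val_inj->]; rewrite ?minxx //.
  + by rewrite min_r // x_le_xk // ltnW.
  + by rewrite min_l.
have max_ab : tmax a b = scind (x (s k)) (Adown s k).
  apply: (tup_eq_ranks (s := s)) => j; rewrite ffunE !scind_Adown_rank rank_prefixE ltnS.
  case: (ltngtP j k) => [lt_jk|lt_kj|_]; rewrite ?maxxx //.
  + by rewrite max_l // x_le_xk // ltnW.
  + by rewrite max_r.
have := mf cab; rewrite min_ab max_ab; lra.
Qed.

Lemma comod_suffix_increment (k : 'I_n) : 0 <= x (s k) ->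
  f (scind (x (s k)) (Aup s k.+1)) - f (scind (x (s k)) (Aup s k.+2))
  = f (rank_suffix s x k) - f (rank_suffix s x k.+1).
Proof.
move=> xk_ge0.
have xk_le_x (j : 'I_n) : (k <= j)%N -> x (s k) <= x (s j) by apply: sx.
set a := scind (x (s k)) _; set b := rank_suffix s x k.+1.
have cab : comonotonic J a b.
  exists s; split=> [i|i j le_ij|i|i j le_ij].
  - by rewrite ffunE; case: ifP.
  - rewrite !scind_Aup_rank !ltnS; case: (leqP k i); case: (leqP k j) => // lt_jk le_ki.
    by have := leq_trans le_ki le_ij; rewrite leqNgt lt_jk.
  - by rewrite ffunE; case: ifP.
  - rewrite !rank_suffixE; case: (leqP k.+1 i) => lt_ki; case: (leqP k.+1 j) => lt_kj //.
    + by apply: sx.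
    + by have := leq_trans lt_ki le_ij; rewrite leqNgt lt_kj.
    + by apply: le_trans xk_ge0 _; apply: xk_le_x; apply: ltnW.
have min_ab : tmin a b = scind (x (s k)) (Aup s k.+2).
  apply: (tup_eq_ranks (s := s)) => j; rewrite ffunE !scind_Aup_rank rank_suffixE !ltnS.
  case: (ltngtP k j) => [lt_kj|lt_jk|_]; rewrite ?minxx //.
  + by rewrite min_l // xk_le_x // ltnW.
  + by rewrite min_r.
have max_ab : tmax a b = rank_suffix s x k.
  apply: (tup_eq_ranks (s := s)) => j; rewrite ffunE scind_Aup_rank !rank_suffixE ltnS.
  case: (ltngtP k j) => [lt_kj|lt_jk|/val_inj<-]; rewrite ?maxxx //.
  + by rewrite max_r // xk_le_x // ltnW.
  + by rewrite max_l.
have := mf cab; rewrite min_ab max_ab; lra.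
Qed.

Lemma sum_prefix_increments p : split_index s x p ->
  \sum_(k < n | (k < p)%N)
     (f (scind (x (s k)) (Adown s k.+1)) - f (scind (x (s k)) (Adown s k)))
  = zeroed f (topp (tneg x)).
Proof.
move=> sp; have [le_pn _] := sp.
pose F k := f (rank_prefix s x k.+1) - f (rank_prefix s x k).
rewrite (eq_bigr (F \o val)) => [|k lt_kp]; last first.
  by apply: comod_prefix_increment; apply: ltW; rewrite (split_index_ltr0 sx sp).
rewrite -(big_mkord (fun k => k < p)%N F) -(big_nat_widen 0 p n xpredT) //.
by rewrite telescope_sumr // (rank_prefix_split sx sp) rank_prefix0.
Qed.

Lemma sum_suffix_increments p : split_index s x p ->
  \sum_(k < n | (p <= k)%N)
     (f (scind (x (s k)) (Aup s k.+1)) - f (scind (x (s k)) (Aup s k.+2)))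
  = zeroed f (tpos x).
Proof.
move=> sp; have [le_pn _] := sp.
pose F k := f (rank_suffix s x k) - f (rank_suffix s x k.+1).
rewrite (eq_bigr (F \o val)) => [|k le_pk]; last first.
  by apply: comod_suffix_increment; rewrite leNgt (split_index_ltr0 sx sp) -leqNgt.
rewrite -(big_geq_mkord p n xpredT).
rewrite (telescope_sumr_eq (fun k => - f (rank_suffix s x k))) => // [|k _].
  by rewrite (rank_suffix_split sx sp) rank_suffix_size /zeroed opprK addrC.
by rewrite opprK addrC.
Qed.

End RankIncrements.

Lemma comod_cond_iii (J : pred R) (f : tup -> R) : J 0 -> comod J f -> cond_iii J f f f.
Proof.
move=> J0 mf s x p Jx sx sp.
rewrite (comod_zeroed_split J0 mf Jx) addrC.
by rewrite (sum_prefix_increments J0 mf Jx sx sp) (sum_suffix_increments J0 mf Jx sx sp).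
Qed.

End ComonotonicModularity.

Unset Implicit Arguments.

Theorem theorem11 (R : realFieldType) (n : nat) (I : pred R)
  (hI : is_interval I) (h0 : I 0) (f : tup R n -> R) :
  [/\ comod I f <-> (exists g h, cond_ii I f g h),
      comod I f <-> (exists g h, cond_iii I f g h),
      comod I f -> cond_ii I f f f
    & comod I f -> cond_iii I f f f].
Proof.
split; [split | split | exact: comod_cond_ii | exact: comod_cond_iii].
- by move=> mf; exists f, f; apply: comod_cond_ii.
- by case=> g [h]; apply: cond_ii_comod.
- by move=> mf; exists f, f; apply: comod_cond_iii.
- by case=> g [h]; apply: cond_iii_comod.
Qed.
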